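(* For $h=2$ the universal variety equals the quasi-shuffle group component: $\mathcal V_{d,2}=\hat{\mathcal G}^{2}(\mathfrak A_d)$ for every $d\ge1$.
   Context: $\mathtt{K}$ is an algebraically closed field of characteristic zero, $\mathfrak A_d=\mathtt{K}[X_1,\dots,X_d]/\{\text{constants}\}$ with basis the non-constant monomials, graded by degree. Words in monomials form a basis of $T(\mathfrak A_d)$; $T^{h}(\mathfrak A_d)$ (resp. $T^{\le h}$) is the span of words of height (sum of degrees of letters) $=h$ (resp. $\le h$), $\pi^h$ the projection onto $T^h$, and $\langle\sum\alpha_w w,v\rangle=\alpha_v$. For $x=(x_1,\dots,x_N)\in(\mathtt{K}^d)^N$, $\langle \mathrm{DS}(x),\mathsf{e}_1\bullet\cdots\bullet\mathsf{e}_k\rangle=\sum_{1\le i_1<\cdots<i_k\le N}\mathsf{e}_1(x_{i_1})\cdots\mathsf{e}_k(x_{i_k})$, and $\mathrm{DS}^h(x)$ is its projection to $T^h(\mathfrak A_d)$. The discrete signature variety $\mathcal V_{d,h,N}$ is the Zariski closure of the image of $\mathrm{DS}^h$ on $(\mathtt{K}^d)^N$; these form an ascending chain in $N$ which stabilizes, and the universal variety $\mathcal V_{d,h}$ is their union. The quasi-shuffle product is defined by $\varepsilon$ a unit and $w\bullet i\ \overline{\sqcup\!\sqcup}\ v\bullet j=(w\ \overline{\sqcup\!\sqcup}\ v\bullet j)\bullet i+(w\bullet i\ \overline{\sqcup\!\sqcup}\ v)\bullet j+(w\ \overline{\sqcup\!\sqcup}\ v)\bullet ij$; $\hat{\mathcal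 G}^{\le h}(\mathfrak A_d)$ is the set of $\mathsf{u}\in T^{\le h}(\mathfrak A_d)$ with coefficient $1$ on $\varepsilon$ and $\langle\mathsf{u},w\ \overline{\sqcup\!\sqcup}\ u\rangle=\langle\mathsf{u},w\rangle\langle\mathsf{u},u\rangle$ whenever the heights sum to $\le h$, and $\hat{\mathcal G}^{h}(\mathfrak A_d)=\pi^h(\hat{\mathcal G}^{\le h}(\mathfrak A_d))$. The paper conjectures $\mathcal V_{d,h}=\hat{\mathcal G}^{h}(\mathfrak A_d)$ for all $h$; this corollary is the case $h=2$. *)

From HB Require Import structures.
From mathcomp Require Import all_boot all_order all_algebra.
From mathcomp Require Import mpoly.
Set Implicit Arguments. Unset Strict Implicit. Unset Printing Implicit Defensive.
Import GRing.Theory.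
Local Open Scope ring_scope.

Section DiscreteSignature.
Variables (K : fieldType) (d : nat).

(* Letters: monomials X^m in d variables, m : 'X_{1..d}; the basis of A_d
   consists of the NON-constant ones (mdeg m > 0). Words: seq of letters. *)
Definition letter := 'X_{1..d}.
Definition word := seq letter.

Definition height (w : word) : nat := sumn (map (@mdeg d) w).

Definition valid_word (w : word) : bool := all (fun m => (0 < mdeg m)%N) w.

(* Elements of T(A_d) are represented by their coefficient functions
   <u, w> = u w, word -> K. *)
Definition tensor := word -> K.

Definition in_T (h : nat) (u : tensor) : Prop :=
  forall w, u w != 0 -> valid_word w && (height w == h).
Definition in_Tle (h : nat) (u : tensor) : Prop :=
  forall w, u w != 0 -> valid_word w && (height w <= h)%N.

Definition proj (h : nat) (u : tensor) : tensor :=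
  fun w => if valid_word w && (height w == h) then u w else 0.

Definition mon_eval (m : letter) (x : 'I_d -> K) : K := \prod_(i < d) x i ^+ m i.

(* <DS(x), e_1 ... e_k> = sum_{i_1 < ... < i_k} e_1(x_{i_1}) ... e_k(x_{i_k});
   increasing index tuples are enumerated as masks of size N with k ones. *)
Definition DS_coef (x : seq ('I_d -> K)) (w : word) : K :=
  \sum_(b : (size x).-tuple bool | count id b == size w)
     \prod_(p <- zip w (mask b x)) mon_eval p.1 p.2.

Definition DS (x : seq ('I_d -> K)) : tensor := DS_coef x.
Definition DSh (h : nat) (x : seq ('I_d -> K)) : tensor := proj h (DS x).

(* Zariski closure inside the finite-dimensional space T^h(A_d): the common
   zero set of all polynomials in (finitely many) coordinates vanishing on S. *)
Definition zariski_closure_T (h : nat) (S : tensor -> Prop) (v : tensor) : Prop :=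
  in_T h v /\
  forall (n : nat) (ws : 'I_n -> word) (p : {mpoly K[n]}),
    (forall s, S s -> p.@[fun i => s (ws i)] = 0) -> p.@[fun i => v (ws i)] = 0.

Definition DS_image (h N : nat) (u : tensor) : Prop :=
  exists x : seq ('I_d -> K), size x = N /\ u = DSh h x.

Definition sig_variety (h N : nat) : tensor -> Prop :=
  zariski_closure_T h (DS_image h N).
Definition universal_variety (h : nat) (v : tensor) : Prop :=
  exists N, sig_variety h N v.

(* Quasi-shuffle product, as a multiset (sequence) of words, each with
   coefficient 1.  qs_rev works on reversed words (head = last letter) and
   implements  w.i qsh v.j = (w qsh v.j).i + (w.i qsh v).j + (w qsh v).(ij),
   where ij is the product of the monomials i and j. *)
Fixpoint qs_rev (a : word) : word -> seq word :=
  match a with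
  | [::] => fun b => [:: b]
  | i :: a' =>
      fix qs_b (b : word) : seq word :=
        match b with
        | [::] => [:: i :: a']
        | j :: b' =>
            map (cons i) (qs_rev a' (j :: b')) ++
            map (cons j) (qs_b b') ++
            map (cons (mnm_add i j)) (qs_rev a' b')
        end
  end.

Definition qshuffle (w v : word) : seq word := map rev (qs_rev (rev w) (rev v)).

Definition pair_sum (u : tensor) (P : seq word) : K := \sum_(z <- P) u z.

Definition Ghat_le (h : nat) (u : tensor) : Prop :=
  in_Tle h u /\ u [::] = 1 /\
  forall w v : word, valid_word w -> valid_word v ->
    (height w + height v <= h)%N ->
    pair_sum u (qshuffle w v) = u w * u v.

Definition Ghat (h : nat) (v : tensor) : Prop :=
  exists u, Ghat_le h u /\ v = proj h u.

End DiscreteSignature.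

From HB Require Import structures.
From mathcomp Require Import all_boot all_order all_algebra.
From mathcomp Require Import mpoly.
From mathcomp Require Import ring zify.
From Stdlib Require Import FunctionalExtensionality.
Set Implicit Arguments. Unset Strict Implicit. Unset Printing Implicit Defensive.
Import GRing.Theory.
Local Open Scope ring_scope.

(* Write e_i ([U i] below) for the letter X_i.  At height 2 everything is governed by
   the symmetric matrix S_ij = <v, e_i qsh e_j> = v(e_j e_i) + v(e_i e_j) + v([e_i e_j]).
   On a signature the quasi-shuffle identity gives S = a a^T, a being the level-one part;
   the 2x2 minors of S are polynomials in the coordinates, so they vanish on the whole
   variety, and over an algebraically closed field a symmetric matrix with vanishing
   2x2 minors is again of the form a a^T.  This is exactly what is needed to extend v
   by a level-one part to an element of G^{<=2}.  Conversely, any level-one vector a and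
   any matrix of coefficients on the words e_k e_l are realised by a discrete path: one
   step a followed by closed loops, each contributing a single matrix entry; the
   coefficients on the one-letter words [e_i e_j] are then forced by the quasi-shuffle
   identity. *)

Local Notation U i := (mnm1 i).

Section Words.
Variable d : nat.
Implicit Types (m : letter d) (w : word d) (i j : 'I_d).

Lemma mdeg2P m : mdeg m = 2%N -> exists i j, m = mnm_add (U i) (U j).
Proof.
move=> m2; have [i mi_gt0|m0] := pickP (fun i => 0 < m i)%N; last first.
  suff m_eq0 : m = 0%MM by rewrite m_eq0 mdeg0 in m2.
  by apply/mnmP => i; rewrite mnm0E; apply/eqP; rewrite -leqn0 leqNgt m0.
have Ui_le_m : (U i <= m)%MM by apply/mnm_lepP => k; rewrite mnm1E; case: eqP => [<-|].
have /mdeg1P[j /eqP mUi] : mdeg (m - U i)%MM == 1%N.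
  by move: m2; rewrite -{1}(submK Ui_le_m) mdegD mdeg1 addn1 => -[->].
by exists j, i; rewrite -mUi submK.
Qed.

Lemma valid_height_gt0 w : valid_word w -> w != [::] -> (0 < height w)%N.
Proof. by case: w => [|m w] // /andP[m_gt0 _] _; apply: leq_trans m_gt0 (leq_addr _ _). Qed.

Lemma height1P w : valid_word w -> height w = 1%N -> exists i, w = [:: U i].
Proof.
rewrite /valid_word /height; case: w => [|m [|m' w]] //=.
  by rewrite andbT addn0 => _ /eqP/mdeg1P[i /eqP ->]; exists i.
by move=> /and3P[m_gt0 m'_gt0 _] ?; exfalso; lia.
Qed.

Lemma height2P w : valid_word w -> height w = 2%N ->
  (exists i j, w = [:: mnm_add (U i) (U j)]) \/ (exists i j, w = [:: U i; U j]).
Proof.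
rewrite /valid_word /height; case: w => [|m [|m' [|m'' w]]] //=.
- by rewrite addn0 => _ /mdeg2P[i [j ->]]; left; exists i, j.
- rewrite addn0 => /and3P[m_gt0 m'_gt0 _] m2.
  have /eqP/mdeg1P[i /eqP ->] : mdeg m = 1%N by lia.
  have /eqP/mdeg1P[j /eqP ->] : mdeg m' = 1%N by lia.
  by right; exists i, j.
- by move=> /and4P[m_gt0 m'_gt0 m''_gt0 _] ?; exfalso; lia.
Qed.

Lemma valid_height2_pair i j :
  valid_word [:: U i; U j] && (height [:: U i; U j] == 2%N).
Proof. by rewrite /valid_word /height /= !mdeg1. Qed.

Lemma valid_height2_product i j :
  valid_word [:: mnm_add (U i) (U j)] && (height [:: mnm_add (U i) (U j)] == 2%N).
Proof. by rewrite /valid_word /height /= mdegD !mdeg1. Qed.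

Lemma qshuffle_nil_l w : qshuffle [::] w = [:: w].
Proof. by rewrite /qshuffle /= revK. Qed.

Lemma qshuffle_nil_r w : qshuffle w [::] = [:: w].
Proof. by rewrite /qshuffle; have := revK w; case: (rev w) => [|i a] /= <-. Qed.

Lemma qshuffle_letters m1 m2 :
  qshuffle [:: m1] [:: m2] = [:: [:: m2; m1]; [:: m1; m2]; [:: mnm_add m1 m2]].
Proof. by []. Qed.

End Words.

Section SignatureRecursion.
Variables (K : fieldType) (d : nat).
Implicit Types (x y z : seq ('I_d -> K)) (p : 'I_d -> K) (m : letter d) (w : word d).

Lemma mon_eval1 i p : mon_eval (U i) p = p i.
Proof.
rewrite /mon_eval (bigD1 i) //= mnm1E eqxx expr1 big1 ?mulr1 // => k /negbTE.
by rewrite mnm1E eq_sym => ->; rewrite expr0.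
Qed.

Lemma mon_evalD m1 m2 p : mon_eval (mnm_add m1 m2) p = mon_eval m1 p * mon_eval m2 p.
Proof. by rewrite /mon_eval -big_split; apply: eq_bigr => k _; rewrite mnmDE exprD. Qed.

Lemma DS_nil w : DS (K:=K) [::] w = (w == [::])%:R.
Proof.
rewrite /DS /DS_coef big_mkcond (big_pred1 [tuple]) => [|b]; last first.
  by apply/esym/eqP; apply: tuple0.
by case: w => [|m w] //=; rewrite big_nil.
Qed.

Lemma DS_cons p x w :
  DS (p :: x) w = DS x w + (if w is m :: w' then mon_eval m p * DS x w' else 0).
Proof.
rewrite /DS /DS_coef /=.
pose consb (q : bool * (size x).-tuple bool) := [tuple of q.1 :: q.2].
rewrite (reindex consb); last first.
  exists (fun t : (size x).+1.-tuple bool => (thead t, [tuple of behead t])).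
    by move=> [c t] _; congr (_, _); apply: val_inj.
  by move=> t _; apply: val_inj; case: t => [[|c t]].
rewrite big_mkcond -(pair_bigA _ (fun c t => if count id (consb (c, t)) == size w then
   \prod_(q <- zip w (mask (consb (c, t)) (p :: x))) mon_eval q.1 q.2 else 0)) /=.
rewrite big_bool /= [X in _ = X + _]big_mkcond addrC; congr (_ + _).
case: w => [|m w] /=; first by rewrite big1.
rewrite [in RHS]big_mkcond big_distrr /=; apply: eq_bigr => t _; rewrite add1n eqSS.
by case: ifP; rewrite ?mulr0 // big_cons.
Qed.

Lemma DS_empty_word x : DS x [::] = 1.
Proof. by elim: x => [|p x IHx]; rewrite ?DS_nil // DS_cons IHx addr0. Qed.

Lemma DS_letter x m : DS x [:: m] = \sum_(p <- x) mon_eval m p.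
Proof.
elim: x => [|p x IHx]; first by rewrite DS_nil big_nil.
by rewrite DS_cons IHx DS_empty_word big_cons mulr1 addrC.
Qed.

Lemma DS_cat_letter y z m : DS (y ++ z) [:: m] = DS y [:: m] + DS z [:: m].
Proof. by rewrite !DS_letter big_cat. Qed.

Lemma DS_flatten_letter (s : seq (seq ('I_d -> K))) m :
  DS (flatten s) [:: m] = \sum_(z <- s) DS z [:: m].
Proof. by rewrite DS_letter big_flatten; apply: eq_bigr => z _; rewrite DS_letter. Qed.

Lemma DS_cat_pair y z m1 m2 :
  DS (y ++ z) [:: m1; m2] = DS y [:: m1; m2] + DS z [:: m1; m2] + DS y [:: m1] * DS z [:: m2].
Proof.
elim: y => [|p y IHy] /=; first by rewrite !DS_nil mul0r add0r addr0.
by rewrite !DS_cons IHy DS_cat_letter !DS_empty_word; ring.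
Qed.

Lemma DS_qshuffle_letters x m1 m2 :
  pair_sum (DS x) (qshuffle [:: m1] [:: m2]) = DS x [:: m1] * DS x [:: m2].
Proof.
rewrite qshuffle_letters /pair_sum !big_cons big_nil addr0.
elim: x => [|p x IHx]; first by rewrite !DS_nil !addr0 mulr0.
rewrite !DS_cons !DS_empty_word mon_evalD.
have -> : DS x [:: mnm_add m1 m2] =
    DS x [:: m1] * DS x [:: m2] - DS x [:: m2; m1] - DS x [:: m1; m2].
  by rewrite -IHx; ring.
ring.
Qed.

End SignatureRecursion.

Section LevelTwo.
Variables (K : fieldType) (d : nat).
Implicit Types (s t u v : tensor K d) (x : seq ('I_d -> K)) (w : word d) (i j : 'I_d).

Definition qsh_pair s i j := pair_sum s (qshuffle [:: U i] [:: U j]).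

Lemma qsh_pairE s i j :
  qsh_pair s i j = s [:: U j; U i] + s [:: U i; U j] + s [:: mnm_add (U i) (U j)].
Proof. by rewrite /qsh_pair qshuffle_letters /pair_sum !big_cons big_nil addr0 addrA. Qed.

Lemma qsh_pairC s i j : qsh_pair s i j = qsh_pair s j i.
Proof. by rewrite !qsh_pairE addmC [s [:: U j; U i] + _]addrC. Qed.

Lemma in_T_out h s w : in_T h s -> ~~ (valid_word w && (height w == h)) -> s w = 0.
Proof. by move=> sT; apply: contraNeq; apply: sT. Qed.

Lemma proj_in_T h u : in_T h (proj h u).
Proof. by move=> w; rewrite /proj; case: ifP => // _; rewrite eqxx. Qed.

Lemma qsh_pair_proj2 u i j : qsh_pair (proj 2 u) i j = qsh_pair u i j.
Proof. by rewrite !qsh_pairE /proj !valid_height2_pair valid_height2_product. Qed.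

Lemma DSh2_pair x i j : DSh 2 x [:: U i; U j] = DS x [:: U i; U j].
Proof. by rewrite /DSh /proj valid_height2_pair. Qed.

Lemma qsh_pair_DSh2 x i j : qsh_pair (DSh 2 x) i j = DS x [:: U i] * DS x [:: U j].
Proof. by rewrite qsh_pair_proj2; apply: DS_qshuffle_letters. Qed.

Lemma in_T2_eq s t : in_T 2 s -> in_T 2 t ->
  (forall i j, s [:: U i; U j] = t [:: U i; U j]) ->
  (forall i j, qsh_pair s i j = qsh_pair t i j) -> s = t.
Proof.
move=> sT tT st_pair st_qsh; apply: functional_extensionality => w.
have [/andP[w_valid /eqP w2]|w_out] := boolP (valid_word w && (height w == 2%N)); last first.
  by rewrite (in_T_out sT w_out) (in_T_out tT w_out).
have [[i [j ->]]|[i [j ->]]] := height2P w_valid w2; last exact: st_pair.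
by move: (st_qsh i j); rewrite !qsh_pairE !st_pair => /addrI.
Qed.

Lemma sig_variety2_minor N v i j k l : sig_variety 2 N v ->
  qsh_pair v i k * qsh_pair v j l = qsh_pair v i l * qsh_pair v j k.
Proof.
move=> [_ v_closure]; apply/eqP; rewrite -subr_eq0; apply/eqP.
pose sum3 (o : nat) : {mpoly K[12]} := 'X_(inord o) + 'X_(inord o.+1) + 'X_(inord o.+2).
(* coordinates 3t, 3t+1, 3t+2 are the three words of the t-th quasi-shuffle in [ws] *)
pose ws (a : 'I_12) := nth [::] (qshuffle [:: U i] [:: U k] ++ qshuffle [:: U j] [:: U l] ++
  qshuffle [:: U i] [:: U l] ++ qshuffle [:: U j] [:: U k]) a.
have minor_eval s : (sum3 0%N * sum3 3%N - sum3 6%N * sum3 9%N).@[fun a => s (ws a)] =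
    qsh_pair s i k * qsh_pair s j l - qsh_pair s i l * qsh_pair s j k.
  by rewrite !(mevalB, mevalM, mevalD, mevalXU) /ws !inordK // !qsh_pairE.
rewrite -minor_eval; apply: v_closure => _ [x [_ ->]].
by rewrite minor_eval !qsh_pair_DSh2; ring.
Qed.

Lemma DSh_sig_variety h x : sig_variety h (size x) (DSh h x).
Proof. by split=> [|n ws p p_image]; [exact: proj_in_T | apply: p_image; exists x]. Qed.

Definition extend_level1 v (a : 'I_d -> K) : tensor K d := fun w =>
  match w with
  | [::] => 1
  | [:: m] => if mdeg m == 1%N then mon_eval m a else v w
  | _ => v w
  end.

Section ExtendLevel1.
Variables (v : tensor K d) (a : 'I_d -> K).
Hypothesis vT : in_T 2 v.
Hypothesis v_qsh : forall i j, qsh_pair v i j = a i * a j.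

Lemma extend_level1_in_Tle : in_Tle 2 (extend_level1 v a).
Proof.
have vT2 w : v w != 0 -> valid_word w && (height w <= 2)%N.
  by move/vT/andP=> [-> /eqP ->].
case=> [|m [|m' w]] //=; last by move/vT2.
by case: ifP => [/eqP m1 _|_ /vT2 //]; rewrite /valid_word /height /= m1.
Qed.

Lemma proj2_extend_level1 : proj 2 (extend_level1 v a) = v.
Proof.
apply: functional_extensionality => w; rewrite /proj.
case: ifP => [/andP[_ /eqP w2]|w_out]; last by rewrite (in_T_out vT) ?w_out.
by case: w w2 => [|m [|m' w]] //=; rewrite /height /= addn0 => ->.
Qed.

Lemma extend_level1_qshuffle w1 w2 : valid_word w1 -> valid_word w2 ->
  (height w1 + height w2 <= 2)%N ->
  pair_sum (extend_level1 v a) (qshuffle w1 w2) =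
    extend_level1 v a w1 * extend_level1 v a w2.
Proof.
move=> w1_valid w2_valid h12.
have [->|w1_nil] := eqVneq w1 [::]; first by rewrite qshuffle_nil_l /pair_sum big_seq1 mul1r.
have [->|w2_nil] := eqVneq w2 [::]; first by rewrite qshuffle_nil_r /pair_sum big_seq1 mulr1.
have h1 := valid_height_gt0 w1_valid w1_nil; have h2 := valid_height_gt0 w2_valid w2_nil.
have [i ->] : exists i, w1 = [:: U i] by apply: height1P => //; lia.
have [j ->] : exists j, w2 = [:: U j] by apply: height1P => //; lia.
by rewrite -[LHS]/(qsh_pair _ i j) qsh_pairE /= mdegD !mdeg1 /= !mon_eval1 -v_qsh qsh_pairE.
Qed.

Lemma extend_level1_Ghat_le : Ghat_le 2 (extend_level1 v a).
Proof.
split; [exact: extend_level1_in_Tle | split=> // w1 w2].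
exact: extend_level1_qshuffle.
Qed.

End ExtendLevel1.

Lemma Ghat2P v : Ghat 2 v <->
  in_T 2 v /\ exists a : 'I_d -> K, forall i j, qsh_pair v i j = a i * a j.
Proof.
split=> [[u [[_ [_ u_qsh]] ->]]|[vT [a v_qsh]]].
  split=> [|]; first exact: proj_in_T.
  exists (fun i => u [:: U i]) => i j; rewrite qsh_pair_proj2.
  by apply: u_qsh; rewrite /valid_word /height /= ?mdeg1.
exists (extend_level1 v a); split; last by rewrite proj2_extend_level1.
exact: extend_level1_Ghat_le.
Qed.

End LevelTwo.

Lemma closed_sqrt (K : closedFieldType) (c : K) : exists r : K, r ^+ 2 = c.
Proof.
have [r r2] := @solve_monicpoly K 2 (nth 0 [:: c]) isT; exists r.
by rewrite r2 !big_ord_recl big_ord0 /= expr0 mulr1 mul0r !addr0.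
Qed.

Lemma sym_rank1_factor (K : closedFieldType) n (S : 'I_n -> 'I_n -> K) :
  (forall i j, S i j = S j i) -> (forall i j k l, S i k * S j l = S i l * S j k) ->
  exists a : 'I_n -> K, forall i j, S i j = a i * a j.
Proof.
move=> S_sym S_minor.
have [i0 Si0|S_diag0] := pickP (fun i => S i i != 0); last first.
  exists (fun _ => 0) => i j; rewrite mul0r.
  have := S_minor i j i j; rewrite (eqP (negbFE (S_diag0 i))) (eqP (negbFE (S_diag0 j))).
  by rewrite mul0r [S j i]S_sym => /esym/eqP; rewrite mulf_eq0 orbb => /eqP.
have [r r2] := closed_sqrt (S i0 i0).
have r_neq0 : r != 0 by apply: contra_neq Si0 => r0; rewrite -r2 r0 expr0n.
exists (fun j => S i0 j / r) => i j.
have -> : S i j = S i0 i * S i0 j / S i0 i0.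
  by apply: (mulfI Si0); rewrite (S_minor i0 i i0 j) [S i i0]S_sym; field.
by rewrite -r2; field.
Qed.

Section Realization.
Variables (K : fieldType) (d : nat).
Implicit Types (p : 'I_d -> K) (i j k l : 'I_d) (la : K).

Definition point2 (al be : K) i j : 'I_d -> K :=
  fun k => al * (i == k)%:R + be * (j == k)%:R.

Definition backtrack p := [:: p; fun k => - p k].

Definition triangle i j la := [:: point2 1 0 i j; point2 0 (- la) i j; point2 (-1) la i j].

Lemma DS_backtrack_letter p k : DS (backtrack p) [:: U k] = 0.
Proof. by rewrite DS_letter !big_cons big_nil !mon_eval1 addr0 subrr. Qed.

Lemma DS_backtrack_pair p k l : DS (backtrack p) [:: U k; U l] = - (p k * p l).
Proof. by rewrite !DS_cons DS_nil !DS_empty_word /= !mon_eval1; ring. Qed.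

Lemma DS_triangle_letter i j la k : DS (triangle i j la) [:: U k] = 0.
Proof. by rewrite DS_letter !big_cons big_nil !mon_eval1 /point2; ring. Qed.

Lemma DS_triangle_pair i j la k l : DS (triangle i j la) [:: U k; U l] =
  - ((i == k)%:R * (i == l)%:R) + la * (j == k)%:R * (i == l)%:R
  - la ^+ 2 * ((j == k)%:R * (j == l)%:R).
Proof. by rewrite !DS_cons DS_nil !DS_empty_word /= !mon_eval1 /point2; ring. Qed.

Lemma DS_flatten_pair (T : Type) (F : T -> seq ('I_d -> K)) (r : seq T) k l :
  (forall q k, DS (F q) [:: U k] = 0) ->
  DS (flatten (map F r)) [:: U k; U l] = \sum_(q <- r) DS (F q) [:: U k; U l].
Proof.
move=> F_level1; elim: r => [|q r IHr] /=; first by rewrite DS_nil big_nil.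
by rewrite DS_cat_pair IHr F_level1 mul0r addr0 big_cons.
Qed.

Variable io : K.
Hypothesis io2 : io ^+ 2 = -1.

(* The back-and-forth steps, scaled by a square root [io] of -1, cancel the diagonal
   terms of [DS_triangle_pair]. *)
Definition elementary_path i j la :=
  triangle i j la ++ backtrack (point2 io 0 i j) ++ backtrack (point2 0 (io * la) i j).

Lemma DS_elementary_path_letter i j la k : DS (elementary_path i j la) [:: U k] = 0.
Proof. by rewrite !DS_cat_letter DS_triangle_letter !DS_backtrack_letter !addr0. Qed.

Lemma DS_elementary_path_pair i j la k l :
  DS (elementary_path i j la) [:: U k; U l] = la * (j == k)%:R * (i == l)%:R.
Proof.
rewrite !DS_cat_pair DS_triangle_letter !DS_backtrack_letter !mul0r !addr0.
rewrite DS_triangle_pair !DS_backtrack_pair /point2; apply/eqP; rewrite -subr_eq0; apply/eqP.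
transitivity (- (io ^+ 2 + 1) *
  ((i == k)%:R * (i == l)%:R + la ^+ 2 * ((j == k)%:R * (j == l)%:R))); first by ring.
by rewrite io2 addNr oppr0 mul0r.
Qed.

Lemma DS_realize (a : 'I_d -> K) (M : 'I_d -> 'I_d -> K) :
  exists x, (forall k, DS x [:: U k] = a k) /\ (forall k l, DS x [:: U k; U l] = M k l).
Proof.
pose F (q : 'I_d * 'I_d) := elementary_path q.2 q.1 (M q.1 q.2).
pose y := flatten (map F (index_enum {: 'I_d * 'I_d})).
have y_letter k : DS y [:: U k] = 0.
  by rewrite DS_flatten_letter big_map big1 // => q _; apply: DS_elementary_path_letter.
have y_pair k l : DS y [:: U k; U l] = M k l.
  rewrite DS_flatten_pair => [|q k']; last exact: DS_elementary_path_letter.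
  rewrite (bigD1 (k, l)) //= DS_elementary_path_pair !eqxx !mulr1 big1 ?addr0 // => -[k' l'].
  rewrite DS_elementary_path_pair xpair_eqE /= => /nandP[]/negbTE->.
  - by rewrite mulr0 mul0r.
  - by rewrite mulr0.
exists (a :: y); split=> [k|k l]; rewrite DS_cons /=.
  by rewrite y_letter DS_empty_word mon_eval1 add0r mulr1.
by rewrite y_pair y_letter mulr0 addr0.
Qed.

End Realization.

Theorem corollary5p7 (K : closedFieldType) (Kchar0 : ([pchar K] =i pred0)%R)
  (d : nat) (hd : (0 < d)%N) :
  forall v : tensor K d, universal_variety 2 v <-> Ghat 2 v.
Proof.
move=> v; rewrite Ghat2P; split=> [[N vN]|[vT [a v_qsh]]].
  split; first exact: vN.1.
  by apply: sym_rank1_factor => [i j|i j k l]; [exact: qsh_pairC | exact: sig_variety2_minor vN].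
have [io io2] := imaginary_exists K.
have [x [x_letter x_pair]] := DS_realize io2 a (fun k l => v [:: U k; U l]).
exists (size x); suff -> : v = DSh 2 x by exact: DSh_sig_variety.
apply: in_T2_eq => // [|i j|i j]; first exact: proj_in_T.
  by rewrite DSh2_pair x_pair.
by rewrite qsh_pair_DSh2 v_qsh !x_letter.
Qed.
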